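(* Let $\Phi$ be a real, additive gain graph of order $n$, let $d<n-1$, and let $Q_1,\dots,Q_n\in\mathbb{E}^d$ affinely span $\mathbb{E}^d$ (with $Q_i\neq Q_j$ whenever $i,j$ are adjacent). Then there exist affinely independent points $Q'_1,\dots,Q'_n\in\mathbb{E}^{n-1}$ and a $d$-flat $t$ of $\mathbb{E}^{n-1}$, with $\mathbb{E}^d$ identified isometrically with $t$, such that $\mathcal{H}(\Phi;\mathbf{Q})=\mathcal{H}(\Phi;\mathbf{Q}')^t$.
   Context: A real, additive gain graph $\Phi$ on $\{1,\dots,n\}$: finite graph (multiple edges allowed, every edge with two distinct endpoints) with gains $\phi(e;i,j)\in\mathbb{R}$, $\phi(e;j,i)=-\phi(e;i,j)$. With $\psi_{ij}(P)=d(P,Q_i)^2-d(P,Q_j)^2$, $\mathcal{H}(\Phi;\mathbf{Q})$ consists of the hyperplanes $h(e)=\{P:\psi_{ij}(P)=\phi(e;i,j)\}$ (in the Euclidean space containing the reference points), one per edge $e$ with endpoints $i,j$. For an arrangement $\mathcal{H}$ and affine flat $t$, $\mathcal{H}^t=\{h\cap t:h\in\mathcal{H},\ h\not\supseteq t,\ h\cap t\neq\emptyset\}$. *)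

From HB Require Import structures.
From mathcomp Require Import all_boot all_order all_algebra.
From mathcomp Require Import boolp classical_sets reals.
Set Implicit Arguments. Unset Strict Implicit. Unset Printing Implicit Defensive.
Import Order.TTheory GRing.Theory Num.Theory.
Local Open Scope ring_scope.
Local Open Scope classical_set_scope.

(* Points of Euclidean space E^m are row vectors 'rV[R]_m. *)

Definition sqdist (R : realType) (m : nat) (x y : 'rV[R]_m) : R :=
  \sum_(k < m) (x ord0 k - y ord0 k) ^+ 2.

Definition psi (R : realType) (m : nat) (Qi Qj P : 'rV[R]_m) : R :=
  sqdist P Qi - sqdist P Qj.

(* Gain graph on 'I_n : finite edge type E, each edge e has an ordered pair of
   endpoints ends e = (i, j) (i <> j) and gain g e = phi(e; i, j);
   phi(e; j, i) = - g e is implicit.  h(e) = {P | psi_ij(P) = phi(e;i,j)}.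
   Note psi_ji = - psi_ij, so h(e) does not depend on the orientation. *)
Definition hyp (R : realType) (n m : nat) (E : Type)
  (ends : E -> 'I_n * 'I_n) (g : E -> R) (Q : 'I_n -> 'rV[R]_m) (e : E)
  : set 'rV[R]_m :=
  [set P | psi (Q (ends e).1) (Q (ends e).2) P = g e].

Definition arrangement (R : realType) (n m : nat) (E : Type)
  (ends : E -> 'I_n * 'I_n) (g : E -> R) (Q : 'I_n -> 'rV[R]_m)
  : set (set 'rV[R]_m) :=
  range (hyp ends g Q).

Definition restrict_arr (T : Type) (H : set (set T)) (t : set T) : set (set T) :=
  [set s | exists2 h, H h & [/\ ~ (t `<=` h), h `&` t !=set0 & s = h `&` t]].

Definition affinely_spanning (R : realType) (n m : nat) (Q : 'I_n -> 'rV[R]_m) :=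
  forall P : 'rV[R]_m, exists lam : 'I_n -> R,
    \sum_i lam i = 1 /\ \sum_i lam i *: Q i = P.

Definition affinely_independent (R : realType) (n m : nat) (Q : 'I_n -> 'rV[R]_m) :=
  forall lam : 'I_n -> R,
    \sum_i lam i = 0 -> \sum_i lam i *: Q i = 0 -> forall i, lam i = 0.

Definition is_flat (R : realType) (k m : nat) (t : set 'rV[R]_m) :=
  exists (A : 'M[R]_(k, m)) (b : 'rV[R]_m),
    row_free A /\ t = [set x *m A + b | x in [set: 'rV[R]_k]].

Definition dist_preserving (R : realType) (k m : nat) (f : 'rV[R]_k -> 'rV[R]_m) :=
  forall x y, sqdist (f x) (f y) = sqdist x y.

From HB Require Import structures.
From mathcomp Require Import all_boot all_order all_algebra.
From mathcomp Require Import boolp classical_sets reals.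
From mathcomp Require Import zify ring.
Set Implicit Arguments. Unset Strict Implicit. Unset Printing Implicit Defensive.
Import Order.TTheory GRing.Theory Num.Theory.
Local Open Scope ring_scope.
Local Open Scope classical_set_scope.

(* Lift the points to Q'_i = (Q_i, w_i) in E^d x E^k, k = n-1-d, with all w_i
   unit vectors.  Since |w_i|^2 is constant, psi_ij is unchanged on the flat
   E^d x {0}, so every h'(e) meets that flat exactly in the image of h(e), and
   h'(e) neither misses nor contains it because psi_ij is onto when Q_i != Q_j.
   Affine independence of Q' asks that sum lam_i w_i = 0 forces every affine
   dependence lam of the Q_i to vanish; the space of such lam has dimension k,
   and taking w_i to be the normalised i-th column of a basis B of it (any unit
   vector if that column is 0) works:
   if lam = mu B then 0 = <mu, sum lam_i w_i> = sum lam_i^2 / |B_i|. *)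

Section SquaredNorm.
Variable R : realType.

Definition sqnorm (m : nat) (v : 'rV[R]_m) : R := \sum_j v 0 j ^+ 2.

Lemma sqnorm_ge0 m (v : 'rV[R]_m) : 0 <= sqnorm v.
Proof. by rewrite sumr_ge0 // => j _; exact: sqr_ge0. Qed.

Lemma sqnorm_eq0 m (v : 'rV[R]_m) : (sqnorm v == 0) = (v == 0).
Proof.
apply/eqP/eqP => [v0|->]; last by rewrite /sqnorm big1 // => j _; rewrite mxE expr0n.
apply/rowP => j; rewrite mxE; apply/eqP; rewrite -sqrf_eq0; apply/eqP.
by move: v0 => /psumr_eq0P; apply=> // i _; exact: sqr_ge0.
Qed.

Lemma sqnormZ m a (v : 'rV[R]_m) : sqnorm (a *: v) = a ^+ 2 * sqnorm v.
Proof. by rewrite /sqnorm mulr_sumr; apply: eq_bigr => j _; rewrite mxE exprMn. Qed.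

Lemma sqnorm_delta m (j0 : 'I_m) : sqnorm (delta_mx 0 j0 : 'rV[R]_m) = 1.
Proof.
rewrite /sqnorm (bigD1 j0) //= big1 => [|j /negbTE j0j]; rewrite mxE ?j0j ?andbF ?expr0n //.
by rewrite !eqxx expr1n addr0.
Qed.

Lemma sqdistE m (x y : 'rV[R]_m) : sqdist x y = sqnorm (x - y).
Proof. by apply: eq_bigr => j _; rewrite !mxE. Qed.

Lemma sqdistxx m (x : 'rV[R]_m) : sqdist x x = 0.
Proof. by rewrite sqdistE subrr; apply/eqP; rewrite sqnorm_eq0. Qed.

Lemma sqdist0l m (x : 'rV[R]_m) : sqdist 0 x = sqnorm x.
Proof. by rewrite sqdistE sub0r; apply: eq_bigr => j _; rewrite mxE sqrrN. Qed.

Lemma sqdist_row_mx m k (x y : 'rV[R]_m) (u v : 'rV[R]_k) :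
  sqdist (row_mx x u) (row_mx y v) = sqdist x y + sqdist u v.
Proof.
rewrite /sqdist big_split_ord /=; congr (_ + _); apply: eq_bigr => j _;
  by rewrite ?row_mxEl ?row_mxEr.
Qed.

End SquaredNorm.

Section PowerDifference.
Variable R : realType.

Lemma psi_on_line m (Qi Qj : 'rV[R]_m) (s : R) :
  psi Qi Qj (Qj + s *: (Qi - Qj)) = (1 - 2 * s) * sqnorm (Qi - Qj).
Proof.
rewrite /psi /sqdist /sqnorm -sumrB mulr_sumr; apply: eq_bigr => j _.
by rewrite !mxE; ring.
Qed.

Lemma psi_surjective m (Qi Qj : 'rV[R]_m) (c : R) :
  Qi != Qj -> exists P, psi Qi Qj P = c.
Proof.
rewrite -subr_eq0 -sqnorm_eq0 => N0.
by exists (Qj + ((1 - c / sqnorm (Qi - Qj)) / 2) *: (Qi - Qj)); rewrite psi_on_line; field.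
Qed.

Lemma psi_lift_equinorm m k (Qi Qj P : 'rV[R]_m) (wi wj : 'rV[R]_k) :
  sqnorm wi = sqnorm wj ->
  psi (row_mx Qi wi) (row_mx Qj wj) (row_mx P 0) = psi Qi Qj P.
Proof. by move=> wij; rewrite /psi !sqdist_row_mx !sqdist0l wij; ring. Qed.

End PowerDifference.

Section Arrangement.
Variables (R : realType) (n m m' : nat) (E : Type).
Variables (ends : E -> 'I_n * 'I_n) (g : E -> R).
Variables (Q : 'I_n -> 'rV[R]_m) (Q' : 'I_n -> 'rV[R]_m').
Variable f : 'rV[R]_m -> 'rV[R]_m'.
Hypothesis psi_f : forall i j P, psi (Q' i) (Q' j) (f P) = psi (Q i) (Q j) P.
Hypothesis Hadj : forall e, Q (ends e).1 != Q (ends e).2.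

Lemma hyp_setI_range e : hyp ends g Q' e `&` range f = f @` hyp ends g Q e.
Proof.
apply/seteqP; split => [y [h'y [x _ xy]]|_ [x hx <-]].
  by exists x => //; move: h'y; rewrite -xy /hyp /= psi_f.
by split; [rewrite /hyp /= psi_f | exists x].
Qed.

Lemma range_not_subset_hyp e : ~ (range f `<=` hyp ends g Q' e).
Proof.
have [x hx] := psi_surjective (g e + 1) (Hadj e).
move=> /(_ (f x) (ex_intro2 _ _ x I erefl)).
by rewrite /hyp /= psi_f hx => /eqP; rewrite -subr_eq0 addrAC subrr add0r oner_eq0.
Qed.

Lemma image_hyp_neq0 e : f @` hyp ends g Q e !=set0.
Proof. by have [x hx] := psi_surjective (g e) (Hadj e); exists (f x), x. Qed.

Lemma image_arrangement :
  [set f @` h | h in arrangement ends g Q]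
    = restrict_arr (arrangement ends g Q') (range f).
Proof.
apply/seteqP; split => [_ [_ [e _ <-] <-]|_ [_ [e _ <-] [_ _ ->]]].
  exists (hyp ends g Q' e); first by exists e.
  by rewrite hyp_setI_range; split; [exact: range_not_subset_hyp | exact: image_hyp_neq0 |].
by exists (hyp ends g Q e); [exists e | rewrite hyp_setI_range].
Qed.

End Arrangement.

Section CoordinateFlat.
Variables (R : realType) (d k : nat).

Definition embed (x : 'rV[R]_d) : 'rV[R]_(d + k) := row_mx x 0.

Lemma embed_dist_preserving : dist_preserving embed.
Proof. by move=> x y; rewrite /embed sqdist_row_mx sqdistxx addr0. Qed.

Lemma is_flat_range_embed : is_flat d (range embed).
Proof.
have embedE x : x *m row_mx 1%:M 0 + 0 = embed x.
  by rewrite mul_mx_row mulmx1 mulmx0 addr0.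
exists (row_mx 1%:M 0), 0; split.
  by apply/row_freeP; exists (col_mx 1%:M 0); rewrite mul_row_col mulmx1 mulmx0 addr0.
by apply/seteqP; split => _ [x _ <-]; exists x; rewrite ?embedE.
Qed.

End CoordinateFlat.

Section SeparatingUnitVectors.
Variable R : realType.

Lemma separating_unit_vectors k n (B : 'M[R]_(k, n)) : (0 < k)%N ->
  exists (w : 'I_n -> 'rV[R]_k),
    (forall i, sqnorm (w i) = 1) /\
    (forall lam : 'rV[R]_n, (lam <= B)%MS -> \sum_i lam 0 i *: w i = 0 -> lam = 0).
Proof.
move=> k_gt0; pose b i : 'rV[R]_k := (col i B)^T.
pose s i := Num.sqrt (sqnorm (b i)).
pose w i := if b i == 0 then delta_mx 0 (Ordinal k_gt0) else (s i)^-1 *: b i.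
have s_gt0 i : b i != 0 -> 0 < s i.
  by move=> bi0; rewrite sqrtr_gt0 lt_def sqnorm_eq0 bi0 sqnorm_ge0.
exists w; split=> [i|_ /submxP[mu ->] wdep].
  rewrite /w; case: ifP => [_|/negbT bi0]; first exact: sqnorm_delta.
  rewrite sqnormZ -[sqnorm (b i)]sqr_sqrtr ?sqnorm_ge0 // -/(s i) -exprMn.
  by rewrite mulVf ?expr1n // gt_eqF ?s_gt0.
pose lam i := (mu *m B) 0 i.
have lamE i : lam i = (mu *m (b i)^T) 0 0 by rewrite trmxK colE mulmxA -colE mxE.
(* Pairing the dependence with [mu] gives a sum of nonnegative terms. *)
have term_sum : \sum_i lam i ^+ 2 / s i = 0.
  have : \sum_i lam i *: (mu *m (w i)^T) = 0.
    have := congr1 (fun v => mu *m v^T) wdep.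
    rewrite /= trmx0 mulmx0 linear_sum mulmx_sumr => mu_dep; rewrite -[RHS]mu_dep.
    by apply: eq_bigr => i _; rewrite linearZ /= -scalemxAr.
  move/(congr1 (fun M : 'M[R]_1 => M 0 0)); rewrite summxE mxE => dep0.
  rewrite -[RHS]dep0; apply: eq_bigr => i _; rewrite mxE /w.
  case: eqP => [bi0|_]; last by rewrite linearZ /= -scalemxAr mxE -lamE; ring.
  by rewrite lamE bi0 trmx0 mulmx0 mxE; ring.
apply/rowP => i; rewrite [RHS]mxE -/(lam i).
have /psumr_eq0P term0 := term_sum.
have /(_ i isT) /eqP := term0 (fun i _ => divr_ge0 (sqr_ge0 _) (sqrtr_ge0 _)).
rewrite mulf_eq0 sqrf_eq0 invr_eq0 => /orP[/eqP //|].
rewrite /s sqrtr_eq0 le_eqVlt ltNge sqnorm_ge0 orbF sqnorm_eq0.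
by rewrite lamE => /eqP->; rewrite trmx0 mulmx0 mxE.
Qed.

End SeparatingUnitVectors.

Section AffineDependences.
Variables (R : realType) (n d : nat) (Q : 'I_n -> 'rV[R]_d).

(* Its left kernel is the space of affine dependences of the [Q i]. *)
Definition affine_mx : 'M[R]_(n, 1 + d) := row_mx (const_mx 1) (\matrix_i Q i).

Lemma mul_affine_mx (lam : 'rV[R]_n) :
  lam *m affine_mx = row_mx (\sum_i lam 0 i)%:M (\sum_i lam 0 i *: Q i).
Proof.
rewrite mul_mx_row; congr row_mx; last first.
  by rewrite mulmx_sum_row; apply: eq_bigr => i _; rewrite rowK.
by apply/rowP => j; rewrite (ord1 j) !mxE; apply: eq_bigr => i _; rewrite !mxE mulr1.
Qed.

Lemma affinely_spanning_row_full : affinely_spanning Q -> row_full affine_mx.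
Proof.
move=> Hspan; rewrite -sub1mx; apply/row_subP => j; set v := row j 1%:M.
have [lam1 [sum_lam1 comb_lam1]] := Hspan (rsubmx v).
have [lam2 [sum_lam2 comb_lam2]] := Hspan 0.
pose a := lsubmx v 0 0.
apply/submxP; exists (\row_i (lam1 i + (a - 1) * lam2 i)).
rewrite mul_affine_mx -[LHS]hsubmxK; congr row_mx.
  apply/rowP => j'; rewrite (ord1 j') [RHS]mxE mulr1n -/a.
  under eq_bigr => i _ do rewrite mxE.
  by rewrite big_split /= -mulr_sumr sum_lam1 sum_lam2; ring.
under eq_bigr => i _ do rewrite mxE scalerDl -scalerA.
by rewrite big_split /= -scaler_sumr comb_lam1 comb_lam2 scaler0 addr0.
Qed.

Lemma rank_affine_dependences :
  affinely_spanning Q -> \rank (kermx affine_mx) = (n - (1 + d))%N.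
Proof. by move=> /affinely_spanning_row_full /eqP full; rewrite mxrank_ker full. Qed.

Lemma affinely_independent_lift k (w : 'I_n -> 'rV[R]_k) :
  (forall lam : 'rV[R]_n, (lam <= kermx affine_mx)%MS ->
     \sum_i lam 0 i *: w i = 0 -> lam = 0) ->
  affinely_independent (fun i => row_mx (Q i) (w i)).
Proof.
move=> w_sep lam sum_lam0 comb_lam0 i.
have lift_comb : \sum_i lam i *: row_mx (Q i) (w i) =
    row_mx (\sum_i lam i *: Q i) (\sum_i lam i *: w i).
  by rewrite -[LHS]hsubmxK !linear_sum /=; congr row_mx; apply: eq_bigr => j _;
     rewrite linearZ /= ?row_mxKl ?row_mxKr.
move: comb_lam0; rewrite lift_comb -row_mx0 => /eq_row_mx[Qdep wdep].
have lam_dep : (\row_i lam i <= kermx affine_mx)%MS.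
  rewrite sub_kermx mul_affine_mx; under eq_bigr => j _ do rewrite mxE.
  under [X in row_mx _ X]eq_bigr => j _ do rewrite mxE.
  by rewrite sum_lam0 Qdep raddf0 row_mx0.
have /(_ lam_dep) := w_sep (\row_i lam i).
under eq_bigr => j _ do rewrite mxE.
by move=> /(_ wdep) /rowP /(_ i); rewrite !mxE.
Qed.

End AffineDependences.

Lemma exists_unit_independent_lift (R : realType) n d (Q : 'I_n -> 'rV[R]_d) :
  (d.+1 < n)%N -> affinely_spanning Q ->
  exists (w : 'I_n -> 'rV[R]_(n - (1 + d))),
    (forall i, sqnorm (w i) = 1) /\ affinely_independent (fun i => row_mx (Q i) (w i)).
Proof.
move=> lt_dn Hspan; rewrite -(rank_affine_dependences Hspan).
have [|w [w_unit w_sep]] := separating_unit_vectors (row_base (kermx (affine_mx Q))).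
  by rewrite rank_affine_dependences //; lia.
exists w; split => //; apply: affinely_independent_lift => lam lam_dep.
by apply: w_sep; rewrite eq_row_base.
Qed.

Theorem theorem7p5 (R : realType) (n d : nat) (E : finType)
  (ends : E -> 'I_n * 'I_n) (g : E -> R)
  (Hends : forall e, (ends e).1 != (ends e).2)
  (Q : 'I_n -> 'rV[R]_d)
  (Hd : (d < n.-1)%N)
  (Hspan : affinely_spanning Q)
  (Hadj : forall e, Q (ends e).1 != Q (ends e).2) :
  exists (Q' : 'I_n -> 'rV[R]_(n.-1)) (t : set 'rV[R]_(n.-1))
         (f : 'rV[R]_d -> 'rV[R]_(n.-1)),
    [/\ affinely_independent Q',
        is_flat d t,
        dist_preserving f,
        f @` [set: 'rV[R]_d] = t &
        [set f @` h | h in arrangement ends g Q]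
          = restrict_arr (arrangement ends g Q') t].
Proof.
have [|w [w_unit Q'_indep]] := exists_unit_independent_lift _ Hspan; first by lia.
rewrite (_ : n.-1 = d + (n - (1 + d)))%N; last by lia.
pose f := @embed R d (n - (1 + d)).
exists (fun i => row_mx (Q i) (w i)), (range f), f; split => //.
- exact: is_flat_range_embed.
- exact: embed_dist_preserving.
- by apply: image_arrangement => // i j P; rewrite psi_lift_equinorm // !w_unit.
Qed.
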